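(* Let $d,s,t,\ell$ be nonnegative integers with $s\ge 1$, $d \geq 2t-3$ and $t \geq \max\{4, \ell+3\}$, and let $\theta_{t,\ell}\in\Theta_{t,\ell}$. For any two edges of $W_d(s)$, the number of subgraphs of $W_d(s)$ isomorphic to $\theta_{t,\ell}$ that contain both of these edges and contain exactly one hub vertex of $W_d(s)$ is at most \[ N= \begin{cases} \max\{s(t-3),\, t-2\}, & \text{if } \theta_{t,\ell} = F_t,\\ s(t-3), & \text{if } \theta_{t,\ell} \neq F_t \text{ and } \mathbf{X}(\theta_{t,\ell}) \text{ is symmetric},\\ 2s(t-3), & \text{if } \mathbf{X}(\theta_{t,\ell}) \text{ is asymmetric}. \end{cases} \]
   Context: For $d \ge 3$ and $s \ge 1$, the $s$-hubbed wheel $W_d(s) = \overline{K_s} + C_d$ has vertex set $\{u_1,\dots,u_s\} \cup \{v_1,\dots,v_d\}$, where $v_1v_2\cdots v_dv_1$ is a cycle, the hub vertices $u_1,\dots,u_s$ are pairwise non-adjacent, and every $u_a$ is adjacent to every $v_i$. Edges $u_av_i$ are spokes; edges $v_iv_{i+1}$ (indices mod $d$) are rim edges. For $t\ge 3$ and $0 \le \ell \le t-3$, $\Theta_{t,\ell}$ is the class of graphs $\theta_{t,\ell}$ obtained from a cycle $v_1v_2\cdots v_tv_1$ by adding exactly $\ell$ chords $v_1v_{i_1},\dots,v_1v_{i_\ell}$ with $2<i_1<\cdots<i_\ell<t$. Its vector is $\mathbf{X}(\theta_{t,\ell}) = (2, i_1, \dots, i_\ell, t)$. The graph (or its vector) is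 symmetric if $\ell = 0$ or $i_j + i_{\ell+1-j} = t+2$ for every $j \le (\ell+1)/2$, and asymmetric otherwise. The fan $F_t$ is $\theta_{t,t-3}$, i.e., the $t$-cycle with all chords $v_1v_i$, $3\le i\le t-1$. *)

From mathcomp Require Import all_boot all_order.
Set Implicit Arguments. Unset Strict Implicit. Unset Printing Implicit Defensive.

(* Vertices of the s-hubbed wheel W_d(s): hubs u_a = inl a (a : 'I_s),
   rim vertices v_{i+1} = inr i (i : 'I_d).  Edges are 2-element vertex sets. *)
Definition wV (s d : nat) : finType := ('I_s + 'I_d)%type.

Definition wheel_edges (s d : nat) : {set {set wV s d}} :=
  [set [set (inl a : wV s d); inr i] | a : 'I_s, i : 'I_d] :|:
  [set [set (inr i : wV s d); inr (ordS i)] | i : 'I_d].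

Definition vset (T : finType) (F : {set {set T}}) : {set T} := \bigcup_(e in F) e.

(* theta_{t,l} on vertices 'I_t (vertex k stands for v_{k+1}); cs is the list
   (i_1, ..., i_l) of chord endpoints: chords v_1 v_{i_j}. *)
Definition theta_adj (t : nat) (cs : seq nat) (i j : 'I_t) : bool :=
  (val j == (val i).+1 %% t) || ((val i == 0) && ((val j).+1 \in cs)).

Definition theta_edges (t : nat) (cs : seq nat) (T : finType) (f : 'I_t -> T)
  : {set {set T}} :=
  [set [set f p.1; f p.2] | p in [set p : 'I_t * 'I_t | theta_adj cs p.1 p.2]].

Definition theta_data (t l : nat) (cs : seq nat) : Prop :=
  [/\ size cs = l, sorted ltn cs & all (fun i => 2 < i < t) cs].

(* F is the edge set of a subgraph isomorphic to theta_{t,l}(cs)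
   (theta has no isolated vertices, so the subgraph is its edge set). *)
Definition is_theta_copy (t : nat) (cs : seq nat) (T : finType)
  (F : {set {set T}}) : bool :=
  [exists f : {ffun 'I_t -> T}, injectiveb f && (F == theta_edges cs f)].

Definition is_fan (t : nat) (cs : seq nat) : bool := cs == iota 3 (t - 3).

(* Symmetry of X = (2, i_1, ..., i_l, t): l = 0 or i_j + i_{l+1-j} = t+2
   for every 1 <= j <= (l+1)/2 (1-indexed; cs is 0-indexed). *)
Definition theta_symmetric (t : nat) (cs : seq nat) : bool :=
  let l := size cs in
  (l == 0) ||
  all (fun j => nth 0 cs j.-1 + nth 0 cs (l - j) == t + 2) (iota 1 l.+1./2).

Definition bound_N (s t : nat) (cs : seq nat) : nat :=
  if is_fan t cs then maxn (s * (t - 3)) (t - 2)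
  else if theta_symmetric t cs then s * (t - 3) else 2 * s * (t - 3).

From mathcomp Require Import all_boot all_order ssralg zmodp.
From mathcomp Require Import zify ring.
Set Implicit Arguments. Unset Strict Implicit. Unset Printing Implicit Defensive.
Import GRing.Theory.

(* A copy of theta_{t,l} meeting a single hub u_a sends one cycle vertex to u_a; the
   other t - 1 cycle vertices form a path of rim edges, hence fill a rim arc
   v_r, ..., v_(r+t-2) traversed in one of two directions, and a chord between two
   rim vertices is impossible.  So the copy is determined by (a, r) together with the
   set of arc offsets joined to u_a, and that set is one of two sets read off from
   X(theta), one per direction: they coincide when X(theta) is symmetric, and contain
   all t - 1 offsets only for the fan.  For fixed edges e1, e2 it remains to count the
   starts r: if both are rim edges, at most t - 3 starts work for each hub, because
   d >= 2t - 3 keeps the arc from wrapping around; if one is a spoke u_a v_x, the hub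
   is a and r = x - o for an offset o of the set, where the two extreme offsets
   exclude each other. *)

Lemma modn_lt2 x k : x < 2 * k -> x %% k = if x < k then x else x - k.
Proof.
case: ifP => hx hk; first by rewrite modn_small.
have -> : x = (x - k) + k by lia.
by rewrite modnDr modn_small; lia.
Qed.

Lemma modS_lt x k : x < k -> x.+1 %% k = if x.+1 < k then x.+1 else 0.
Proof. by move=> hx; rewrite modn_lt2; [case: ifP; lia | lia]. Qed.

Lemma card_ltn_subset (T : finType) (A B : {set T}) x :
  A \subset B -> x \in B -> x \notin A -> #|A| < #|B|.
Proof. by move=> AB xB xA; apply/proper_card/properP; split=> //; exists x. Qed.

Lemma card_ltn_subset2 (T : finType) (A B : {set T}) x y :
  A \subset B -> x \in B -> y \in B -> ~~ ((x \in A) && (y \in A)) -> #|A| < #|B|.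
Proof.
move=> AB xB yB; have [xA /= yA | xA _] := boolP (x \in A).
  exact: card_ltn_subset yB yA.
exact: card_ltn_subset xB xA.
Qed.

Lemma card_bigcup_le (I T : finType) (P : pred I) (F : I -> {set T}) :
  #|\bigcup_(i | P i) F i| <= \sum_(i | P i) #|F i|.
Proof.
elim/big_rec2: _ => [|i x y _ IH]; first by rewrite cards0.
by apply: leq_trans (leq_card_setU _ _).1 _; rewrite leq_add2l.
Qed.

Section CyclicIndices.
Variable n : nat.
Local Open Scope ring_scope.

Lemma ordS_add1 (i : 'I_n.+2) : ordS i = i + 1.
Proof. by apply: val_inj => /=; rewrite modnDmr addn1. Qed.

Lemma natr_Zp_inj (k1 k2 : nat) : (k1 < n.+2)%N -> (k2 < n.+2)%N ->
  (k1%:R : 'I_n.+2) = k2%:R -> k1 = k2.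
Proof. by move=> h1 h2 /(congr1 val); rewrite !Zp_nat /= !modn_small. Qed.

Lemma addr_natr_inj (x : 'I_n.+2) (k1 k2 : nat) : (k1 < n.+2)%N -> (k2 < n.+2)%N ->
  x + k1%:R = x + k2%:R -> k1 = k2.
Proof. by move=> h1 h2 /addrI; apply: natr_Zp_inj. Qed.

End CyclicIndices.

Section WheelEdges.
Variables (s n : nat).
Local Open Scope ring_scope.
Local Notation V := (wV s n.+2).

Definition spoke (a : 'I_s) (p : 'I_n.+2) : {set V} := [set inl a; inr p].
Definition rim_edge (p : 'I_n.+2) : {set V} := [set inr p; inr (p + 1)].

Lemma wheel_edgeP e : e \in wheel_edges s n.+2 ->
  (exists a p, e = spoke a p) \/ (exists p, e = rim_edge p).
Proof.
rewrite inE => /orP [/imset2P [a i _ _ ->] | /imsetP [i _ ->]].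
  by left; exists a, i.
by right; exists i; rewrite /rim_edge ordS_add1.
Qed.

Lemma spoke_inj a p a' p' : spoke a p = spoke a' p' -> a = a' /\ p = p'.
Proof.
move=> E.
have : (inl a : V) \in spoke a' p' by rewrite -E !inE eqxx.
have : (inr p : V) \in spoke a' p' by rewrite -E !inE eqxx orbT.
by rewrite !inE => /orP [//|/eqP [->]] /orP [/eqP [->]|].
Qed.

Lemma spoke_neq_rim_edge a p q : spoke a p <> rim_edge q.
Proof.
move=> E; have : (inl a : V) \in rim_edge q by rewrite -E !inE eqxx.
by rewrite !inE.
Qed.

Lemma rim_edge_inj : (2 < n.+2)%N -> injective rim_edge.
Proof.
move=> n2 p q E.
have : (inr p : V) \in rim_edge q by rewrite -E !inE eqxx.
rewrite !inE => /orP [/eqP [->] //|/eqP [Hp]].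
have : (inr q : V) \in rim_edge p by rewrite E !inE eqxx.
rewrite Hp !inE => /orP [/eqP [] | /eqP []] H.
  have : q + 0%:R = q + 1%:R by rewrite addr0 {1}H.
  by move/addr_natr_inj => /(_ isT isT).
have : q + 0%:R = q + 2%:R by rewrite addr0 {1}H -addrA mulr2n.
by move/addr_natr_inj => /(_ isT n2).
Qed.

Lemma rim_pair_succ u v : [set (inr u : V); inr v] \in wheel_edges s n.+2 -> u <> v ->
  v = u + 1 \/ u = v + 1.
Proof.
move=> /wheel_edgeP [[a [p E]] | [p E]].
  have : (inl a : V) \in [set (inr u : V); inr v] by rewrite E !inE eqxx.
  by rewrite !inE.
have : (inr u : V) \in rim_edge p by rewrite -E !inE eqxx.
have : (inr v : V) \in rim_edge p by rewrite -E !inE eqxx orbT.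
rewrite !inE => /orP [/eqP [->]|/eqP [->]] /orP [/eqP [->]|/eqP [->]] uv;
  by [left | right | case: uv].
Qed.

End WheelEdges.

Section ArcCopies.
Variables (s n m : nat).
Hypothesis hD : 2 * m + 5 <= n.+2.
Local Open Scope ring_scope.
Local Notation V := (wV s n.+2).

Fact arc_copy_key : unit. Proof. exact: tt. Qed.
Definition arc_copy : 'I_s -> 'I_n.+2 -> {set 'I_m.+3} -> {set {set V}} :=
  locked_with arc_copy_key (fun a r J =>
    [set spoke a (r + (val o)%:R) | o in J] :|:
    [set rim_edge s (r + (val o)%:R) | o : 'I_m.+2]).

Lemma arc_copyE a r J : arc_copy a r J =
  [set spoke a (r + (val o)%:R) | o in J] :|:
  [set rim_edge s (r + (val o)%:R) | o : 'I_m.+2].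
Proof. by rewrite /arc_copy unlock. Qed.

Lemma arc_copyP a r J e : e \in arc_copy a r J ->
  (exists2 o, o \in J & e = spoke a (r + (val o)%:R)) \/
  (exists o : 'I_m.+2, e = rim_edge s (r + (val o)%:R)).
Proof.
rewrite arc_copyE inE => /orP [/imsetP [o oJ ->] | /imsetP [o _ ->]].
  by left; exists o.
by right; exists o.
Qed.

Lemma spoke_in_arc_copy a r J a' p : spoke a' p \in arc_copy a r J ->
  a' = a /\ exists2 o, o \in J & p = r + (val o)%:R.
Proof.
case/arc_copyP => [[o oJ /spoke_inj [-> ->]] | [o /spoke_neq_rim_edge]] //.
by split=> //; exists o.
Qed.

Lemma rim_edge_in_arc_copy a r J p : rim_edge s p \in arc_copy a r J ->
  exists o : 'I_m.+2, p = r + (val o)%:R.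
Proof.
have n2 : (2 < n.+2)%N by lia.
case/arc_copyP => [[o _ /esym /spoke_neq_rim_edge] | [o /(rim_edge_inj n2) ->]] //.
by exists o.
Qed.

Definition arc_starts a J (e e' : {set V}) :=
  [set r | (e \in arc_copy a r J) && (e' \in arc_copy a r J)].

Lemma arc_startsC a J e e' : arc_starts a J e e' = arc_starts a J e' e.
Proof. by apply/setP => r; rewrite !inE andbC. Qed.

(* Both extreme starts [y] and [y - (m+1)] would force [z = y], since the arc
   cannot wrap around the rim. *)
Lemma card_arc_starts_rim a (J : {set 'I_m.+3}) y z : y <> z ->
  (#|arc_starts a J (rim_edge s y) (rim_edge s z)| <= m.+1)%N.
Proof.
move=> yz; set R := arc_starts _ _ _ _.
pose Q := [set o : 'I_m.+2 | y - (val o)%:R \in R].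
have RQ : R \subset [set y - (val o)%:R | o in Q].
  apply/subsetP => r rR; have := rR; rewrite inE => /andP [/rim_edge_in_arc_copy [o Ho] _].
  by apply/imsetP; exists o; [rewrite inE Ho addrK | rewrite Ho addrK].
have not_both : ~~ ((ord0 \in Q) && (ord_max \in Q)).
  apply/negP; rewrite !inE subr0 /= => /andP [/andP [_ /rim_edge_in_arc_copy [o1 E1]]].
  move=> /andP [_ /rim_edge_in_arc_copy [o2 E2]].
  have : y + (val o1 + m.+1)%:R = y + (val o2)%:R by rewrite natrD addrA -E1 E2; ring.
  have o1m : (val o1 < m.+2)%N := ltn_ord o1.
  have o2m : (val o2 < m.+2)%N := ltn_ord o2.
  move/addr_natr_inj => /(_ ltac:(lia) ltac:(lia)) o12.
  by apply: yz; rewrite E1 (_ : val o1 = 0%N) ?addr0 //; lia.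
have cQ : (#|Q| < #|[set: 'I_m.+2]|)%N.
  by apply: card_ltn_subset2 not_both; rewrite ?subsetT ?inE.
apply: leq_trans (subset_leq_card RQ) _; apply: leq_trans (leq_imset_card _ _) _.
by rewrite cardsT card_ord in cQ.
Qed.

(* Here a start [r] is [x - o] with [o \in J]; the two extreme choices of [o]
   would force [e = spoke a0 x]. *)
Lemma card_arc_starts_spoke (a a0 : 'I_s) (J : {set 'I_m.+3}) x (e : {set V}) :
  e <> spoke a0 x -> ord0 \in J -> ord_max \in J ->
  (#|arc_starts a J (spoke a0 x) e| <= (a == a0) * (#|J|).-1)%N.
Proof.
have [<- | a0a] := eqVneq a a0 => ex J0 Jm; last first.
  rewrite mul0n leqn0 cards_eq0; apply/eqP/setP => r; rewrite !inE.
  by apply/negP => /andP [/spoke_in_arc_copy [E _] _]; rewrite E eqxx in a0a.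
rewrite mul1n; set R := arc_starts _ _ _ _.
pose Q := [set o in J | x - (val o)%:R \in R].
have RQ : R \subset [set x - (val o)%:R | o in Q].
  apply/subsetP => r rR; have := rR.
  rewrite inE => /andP [/spoke_in_arc_copy [_ [o oJ Ho]] _].
  by apply/imsetP; exists o; [rewrite inE oJ Ho addrK | rewrite Ho addrK].
have shift (k1 k2 : nat) : (k1 <= m.+2)%N -> (k2 <= m.+2)%N ->
    x + k1%:R = x - (m.+2)%:R + k2%:R -> k1 = 0%N /\ k2 = m.+2.
  move=> k1m k2m E.
  have : x + (k1 + m.+2)%:R = x + k2%:R by rewrite natrD addrA E; ring.
  by move/addr_natr_inj => /(_ ltac:(lia) ltac:(lia)); lia.
have not_both : ~~ ((ord0 \in Q) && (ord_max \in Q)).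
  apply/negP; rewrite !inE subr0 /= => /andP [/and3P [_ _ E1] /and3P [_ _ E2]].
  have lt_o (k : nat) (o : 'I_k) : (val o < k)%N by exact: ltn_ord.
  have n2 : (2 < n.+2)%N by lia.
  case/arc_copyP: E1 => [[o1 _ E1] | [o1 E1]]; case/arc_copyP: E2 => [[o2 _ E2] | [o2 E2]];
    rewrite E1 in E2.
  - have o1m : (val o1 <= m.+2)%N by rewrite -ltnS lt_o.
    have o2m : (val o2 <= m.+2)%N by rewrite -ltnS lt_o.
    case/spoke_inj: E2 => _ /(shift _ _ o1m o2m) [o10 _].
    by apply: ex; rewrite E1 o10 addr0.
  - by move: E2; apply: spoke_neq_rim_edge.
  - by move/esym: E2; apply: spoke_neq_rim_edge.
  - have o1m : (val o1 <= m.+2)%N by apply/ltnW/lt_o.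
    have o2m : (val o2 <= m.+2)%N by apply/ltnW/lt_o.
    move/(rim_edge_inj n2)/(shift _ _ o1m o2m): E2 => [_ o2E].
    by have := lt_o _ o2; rewrite o2E ltnn.
have cQ : (#|Q| < #|J|)%N.
  apply: card_ltn_subset2 not_both => //.
  by apply/subsetP => o; rewrite inE => /andP [].
apply: leq_trans (subset_leq_card RQ) _; apply: leq_trans (leq_imset_card _ _) _.
by rewrite -ltnS prednK // (leq_ltn_trans _ cQ).
Qed.

Lemma sum_card_arc_starts (J : {set 'I_m.+3}) e1 e2 :
  e1 \in wheel_edges s n.+2 -> e2 \in wheel_edges s n.+2 -> e1 != e2 ->
  ord0 \in J -> ord_max \in J ->
  (\sum_a #|arc_starts a J e1 e2| <= maxn (s * m.+1) (#|J|).-1)%N.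
Proof.
move=> e1w e2w /eqP e12 J0 Jm.
have spoke_case (a0 : 'I_s) x (e : {set V}) : e <> spoke a0 x ->
    (\sum_a #|arc_starts a J (spoke a0 x) e| <= maxn (s * m.+1) (#|J|).-1)%N.
  move=> ex; apply: (@leq_trans (\sum_a (a == a0) * (#|J|).-1)).
    by apply: leq_sum => a _; apply: card_arc_starts_spoke.
  rewrite (bigD1 a0) //= eqxx mul1n big1 ?addn0 ?leq_maxr // => a.
  by move/negbTE ->.
case/wheel_edgeP: e1w => [[a0 [x E1]] | [y E1]].
  by rewrite E1; apply: spoke_case => E2; apply: e12; rewrite E1 E2.
case/wheel_edgeP: e2w => [[a0 [x E2]] | [z E2]].
  under eq_bigr do rewrite arc_startsC.
  by rewrite E2; apply: spoke_case => E1'; apply: e12; rewrite E2 E1'.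
have yz : y <> z by move=> yz; apply: e12; rewrite E1 E2 yz.
apply: leq_trans (leq_maxl _ _); rewrite E1 E2.
apply: (@leq_trans (\sum_(a : 'I_s) m.+1)).
  by apply: leq_sum => a _; apply: card_arc_starts_rim.
by rewrite sum_nat_const card_ord.
Qed.

End ArcCopies.

(* With the hub at [v_1] and [v_2, ..., v_t] laid on the rim arc in increasing
   (resp. decreasing) direction, [v_(o+2)] sits at offset [o] (resp. [m+2-o]);
   [hub_offsets] (resp. [hub_offsets_rev]) collects the offsets of the hub's
   neighbours [v_2], [v_t] and the chord ends. *)
Definition hub_offsets (m : nat) (cs : seq nat) : {set 'I_m.+3} :=
  [set o : 'I_m.+3 | (val o == 0) || (val o == m.+2) || ((val o).+2 \in cs)].
Definition hub_offsets_rev (m : nat) (cs : seq nat) : {set 'I_m.+3} :=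
  [set o : 'I_m.+3 | (val o == 0) || (val o == m.+2) || (m.+4 - val o \in cs)].

Lemma theta_symmetric_mem t cs c :
  theta_symmetric t cs -> c \in cs -> t + 2 - c \in cs.
Proof.
rewrite /theta_symmetric => /orP [/eqP s0 | /allP H] cc.
  by move: cc; case: cs s0.
have [i il ci] := nthP 0 cc.
move: H il; rewrite -divn2; move El : (size cs) => l H il.
have pair j : j < l -> j < l.+1 %/ 2 -> nth 0 cs j + nth 0 cs (l - j.+1) = t + 2.
  by move=> jl jh; have /(_ _)/eqP := H j.+1; rewrite mem_iota /=; apply; lia.
have [hi | hi] := ltnP i (l.+1 %/ 2).
  have := pair i il hi; rewrite ci => E.
  by rewrite (_ : t + 2 - c = nth 0 cs (l - i.+1)) ?mem_nth ?El; lia.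
have := pair (l - i.+1) ltac:(lia) ltac:(lia).
rewrite (_ : l - (l - i.+1).+1 = i) ?ci; last by lia.
by move=> E; rewrite (_ : t + 2 - c = nth 0 cs (l - i.+1)) ?mem_nth ?El; lia.
Qed.

Section HubOffsets.
Variables (m : nat) (cs : seq nat).

Lemma hub_offsets_ends J : J \in [set hub_offsets m cs; hub_offsets_rev m cs] ->
  (ord0 \in J) && (ord_max \in J).
Proof. by rewrite !inE => /orP [] /eqP ->; rewrite !inE /= ?eqxx ?orbT. Qed.

Lemma hub_offsets_revE : hub_offsets_rev m cs = (@rev_ord m.+3) @^-1: hub_offsets m cs.
Proof.
apply/setP => o; rewrite !inE /=; have := ltn_ord o => lt_o.
by rewrite (_ : (m.+3 - o.+1).+2 = m.+4 - o); lia.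
Qed.

Lemma card_hub_offsets_rev : #|hub_offsets_rev m cs| = #|hub_offsets m cs|.
Proof. by rewrite hub_offsets_revE card_preimset //; exact: rev_ord_inj. Qed.

Lemma hub_offsets_fan : is_fan m.+4 cs ->
  hub_offsets m cs = setT /\ hub_offsets_rev m cs = setT.
Proof.
move=> /eqP E.
by split; apply/setP => o; rewrite !inE /= E mem_iota; have := ltn_ord o; lia.
Qed.

Lemma card_hub_offsets_nonfan : sorted ltn cs -> all (fun i => 2 < i < m.+4) cs ->
  ~~ is_fan m.+4 cs -> #|hub_offsets m cs| <= m.+2.
Proof.
move=> cs_sorted cs_range; apply: contraR; rewrite -ltnNge => full; apply/eqP.
have {full} full : hub_offsets m cs = setT.
  by apply/eqP; rewrite eqEcard subsetT cardsT card_ord.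
apply: (irr_sorted_eq ltn_trans ltnn cs_sorted (iota_ltn_sorted 3 _)) => x.
rewrite mem_iota; apply/idP/idP => [xc | xr]; first by have := allP cs_range _ xc; lia.
have xl : x - 2 < m.+3 by lia.
have : Ordinal xl \in hub_offsets m cs by rewrite full inE.
by rewrite inE /= (_ : (x - 2).+2 = x); lia.
Qed.

Lemma hub_offsets_sym : theta_symmetric m.+4 cs -> hub_offsets m cs = hub_offsets_rev m cs.
Proof.
move=> /theta_symmetric_mem sym; apply/setP => o; rewrite !inE /=.
have lt_o := ltn_ord o; congr (_ || _); apply/idP/idP => /sym.
  by rewrite (_ : m.+4 + 2 - o.+2 = m.+4 - o) //; lia.
by rewrite (_ : m.+4 + 2 - (m.+4 - o) = o.+2) //; lia.
Qed.

End HubOffsets.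

Lemma theta_adj_irr t cs (k : 'I_t) :
  1 < t -> all (fun i => 2 < i < t) cs -> ~~ theta_adj cs k k.
Proof.
move=> t1 cs_range; rewrite /theta_adj /= negb_or; apply/andP; split.
  by have := ltn_ord k; rewrite (modS_lt (ltn_ord k)); case: ifP; lia.
by apply/negP => /andP [/eqP ->] /(allP cs_range).
Qed.

Lemma vset_theta_edges t cs (T : finType) (f : 'I_t -> T) :
  vset (theta_edges cs f) = f @: setT.
Proof.
apply/setP => x; apply/bigcupP/imsetP => [[_ /imsetP [[i j] _ ->]] | [k _ ->]].
  by rewrite !inE => /orP [] /eqP ->; [exists i | exists j].
have lt_k : k.+1 %% t < t by rewrite ltn_pmod // (leq_ltn_trans _ (ltn_ord k)).
exists [set f k; f (Ordinal lt_k)]; last by rewrite !inE eqxx.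
by apply/imsetP; exists (k, Ordinal lt_k); rewrite // inE /theta_adj /= eqxx.
Qed.

Lemma ord_neq_val k (i j : 'I_k) : i != j -> i <> j :> nat.
Proof. by move=> /eqP ij /val_inj. Qed.

(* The vertex [j] steps after the hub along the cycle sits at offset [arc_off m b j]
   of the arc, the direction of the arc being recorded by [b]; [arc_step] inverts it. *)
Definition arc_off (m : nat) (b : bool) (j : nat) := if b then j.-1 else m.+3 - j.
Definition arc_step (m : nat) (b : bool) (o : nat) := if b then o.+1 else m.+3 - o.

Lemma arc_offK m b j : 1 <= j <= m.+3 -> arc_step m b (arc_off m b j) = j.
Proof. by rewrite /arc_step /arc_off; case: b; lia. Qed.

Lemma arc_stepK m b o : o <= m.+2 -> arc_off m b (arc_step m b o) = o.
Proof. by rewrite /arc_step /arc_off; case: b; lia. Qed.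

Lemma arc_step_range m b o : o <= m.+2 -> 1 <= arc_step m b o <= m.+3.
Proof. by rewrite /arc_step; case: b; lia. Qed.

Section OneHubCopy.
Variables (s n m : nat) (cs : seq nat).
Local Open Scope ring_scope.
Local Notation t := m.+4.
Local Notation V := (wV s n.+2).
Variable h : 'I_t.

Definition walk (j : nat) : 'I_t := inord ((h + j) %% t).

Lemma val_walk j : walk j = (h + j) %% t :> nat.
Proof. by rewrite /walk inordK // ltn_pmod. Qed.

Lemma walk_neq_hub j : (1 <= j <= m.+3)%N -> walk j != h.
Proof.
move=> hj; apply/negP => /eqP /(congr1 (@nat_of_ord _)).
have lt_h := ltn_ord h.
by rewrite val_walk modn_lt2; [case: ifP; lia | lia].
Qed.

Lemma walk_inj j1 j2 : (j1 <= m.+3)%N -> (j2 <= m.+3)%N -> walk j1 = walk j2 -> j1 = j2.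
Proof.
move=> h1 h2 /(congr1 (@nat_of_ord _)); rewrite !val_walk.
have lt_h := ltn_ord h.
by rewrite !modn_lt2; [case: ifP; case: ifP; lia | lia | lia].
Qed.

Lemma theta_adj_walk j : theta_adj cs (walk j) (walk j.+1).
Proof.
apply/orP; left; rewrite /= !val_walk; apply/eqP.
by rewrite -[((h + j) %% t).+1]addn1 modnDml addn1 addnS.
Qed.

Definition steps (k : 'I_t) : nat := if (h < k)%N then (k - h)%N else (k + t - h)%N.

Lemma walk_steps k : k != h -> walk (steps k) = k /\ (1 <= steps k <= m.+3)%N.
Proof.
move=> /ord_neq_val hk; have lt_h := ltn_ord h; have lt_k := ltn_ord k.
split; last by rewrite /steps; case: ifP; lia.
apply: val_inj; rewrite /= val_walk /steps; case: ifP => hlt.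
  by rewrite modn_small; lia.
by rewrite modn_lt2; [case: ifP; lia | lia].
Qed.

Variables (f : 'I_t -> V) (a : 'I_s) (g : 'I_t -> 'I_n.+2).
Hypothesis f_inj : injective f.
Hypothesis f_hub : f h = inl a.
Hypothesis f_rim : forall k, k != h -> f k = inr (g k).
Hypothesis f_wheel : theta_edges cs f \subset wheel_edges s n.+2.

Lemma theta_adj_wheel i j : theta_adj cs i j -> [set f i; f j] \in wheel_edges s n.+2.
Proof. by move=> hij; apply: (subsetP f_wheel); apply/imsetP; exists (i, j); rewrite ?inE. Qed.

Definition rim_walk j := g (walk j).

Lemma rim_walk_inj j1 j2 : (1 <= j1 <= m.+3)%N -> (1 <= j2 <= m.+3)%N ->
  rim_walk j1 = rim_walk j2 -> j1 = j2.
Proof.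
move=> h1 h2 E; apply: walk_inj; try lia.
by apply: f_inj; rewrite !f_rim ?walk_neq_hub // /rim_walk in E *; rewrite E.
Qed.

Lemma rim_walk_step j : (1 <= j <= m.+2)%N ->
  rim_walk j.+1 = rim_walk j + 1 \/ rim_walk j = rim_walk j.+1 + 1.
Proof.
move=> hj; apply: (rim_pair_succ (s := s)); last by move/rim_walk_inj; lia.
by rewrite /rim_walk -!f_rim ?walk_neq_hub; try lia; apply/theta_adj_wheel/theta_adj_walk.
Qed.

(* Consecutive steps move by [+1] or [-1] on the rim, and by injectivity the
   direction can never reverse. *)
Lemma rim_walk_linear : exists2 sg : 'I_n.+2, sg = 1 \/ sg = -1 &
  forall j, (1 <= j <= m.+3)%N -> rim_walk j = rim_walk 1 + sg *+ j.-1.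
Proof.
pose sg := rim_walk 2 - rim_walk 1.
have sg_pm : sg = 1 \/ sg = -1.
  by case: (rim_walk_step (j := 1) isT) => E; rewrite /sg E; [left|right]; ring.
have step j : (1 <= j <= m.+2)%N -> rim_walk j.+1 = rim_walk j + sg.
  elim: j => [//|j IH] hj; have [-> | j_gt0] := posnP j; first by rewrite /sg; ring.
  have IH' := IH ltac:(lia).
  have back : rim_walk j.+2 <> rim_walk j by move/rim_walk_inj; lia.
  case: (rim_walk_step (j := j.+1) ltac:(lia)) => E; case: sg_pm => sgE.
  - by rewrite E sgE.
  - by exfalso; apply: back; rewrite E IH' sgE; ring.
  - have E' : rim_walk j.+2 = rim_walk j.+1 - 1 by rewrite E; ring.
    by exfalso; apply: back; rewrite E' IH' sgE; ring.
  - by rewrite E sgE; ring.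
exists sg => // j; elim: j => [//|j IH] hj.
have [-> | j_gt0] := posnP j; first by rewrite /=; ring.
rewrite step ?IH; try lia.
have -> : j.+1.-1 = j.-1.+1 by lia.
by rewrite mulrSr; ring.
Qed.

Lemma rim_walk_arc : exists r b, forall j, (1 <= j <= m.+3)%N ->
  rim_walk j = r + (arc_off m b j)%:R.
Proof.
have [sg [-> | ->] E] := rim_walk_linear.
  by exists (rim_walk 1), true => j hj; rewrite E.
exists (rim_walk 1 - (m.+2)%:R), false => j hj; rewrite E // /arc_off.
have -> : (m.+2)%:R = (j.-1)%:R + (m.+3 - j)%:R :> 'I_n.+2.
  by rewrite -natrD; congr _%:R; lia.
by rewrite mulNrn; ring.
Qed.

Hypothesis hD : 2 * m + 5 <= n.+2.

Section ArcPositions.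
Variables (r : 'I_n.+2) (b : bool).
Hypothesis rim_walkE : forall j, (1 <= j <= m.+3)%N -> rim_walk j = r + (arc_off m b j)%:R.

Definition arc_pos (k : 'I_t) := arc_off m b (steps k).

Lemma g_arc_pos k : k != h -> g k = r + (arc_pos k)%:R.
Proof. by move=> kh; have [wk sk] := walk_steps kh; rewrite /arc_pos -rim_walkE // /rim_walk wk. Qed.

Lemma arc_pos_le k : k != h -> (arc_pos k <= m.+2)%N.
Proof. by move=> kh; have [_ sk] := walk_steps kh; rewrite /arc_pos /arc_off; case: b; lia. Qed.

Lemma steps_succ (i j : 'I_t) : i != h -> j != h -> j = i.+1 %% t :> nat ->
  steps j = (steps i).+1.
Proof.
move=> /ord_neq_val ih /ord_neq_val jh.
have lt_i := ltn_ord i; have lt_j := ltn_ord j; have lt_h := ltn_ord h.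
by rewrite modS_lt // /steps; case: ifP; case: ifP; case: ifP; lia.
Qed.

Lemma steps_rim_succ k1 k2 : k1 != h -> k2 != h -> g k2 = g k1 + 1 ->
  steps k2 = (steps k1).+1 \/ steps k1 = (steps k2).+1.
Proof.
move=> h1 h2; rewrite !g_arc_pos // => E.
have : r + (arc_pos k2)%:R = r + (arc_pos k1).+1%:R by rewrite E mulrSr addrA.
have l1 := arc_pos_le h1; have l2 := arc_pos_le h2.
move/addr_natr_inj => /(_ ltac:(lia) ltac:(lia)).
have [_ s1] := walk_steps h1; have [_ s2] := walk_steps h2.
by rewrite /arc_pos /arc_off; case: b => E3; [left | right]; lia.
Qed.

Hypothesis cs_range : all (fun i => 2 < i < t) cs.

(* A chord [v_1 v_c] between two rim vertices would join rim vertices whose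
   positions along the arc differ by [c - 1] or [t - c + 1], never by [1]. *)
Lemma theta_adj_off_hub (i j : 'I_t) : theta_adj cs i j -> i != h -> j != h ->
  j = i.+1 %% t :> nat.
Proof.
move=> /orP [/eqP -> //| /andP [/eqP i0 jc]] ih jh; exfalso.
have {}i0 : i = 0 :> nat := i0.
have jr : (2 < j.+1 < t)%N := allP cs_range _ jc.
have gij : g i <> g j.
  move=> E; have ij : i = j by apply: f_inj; rewrite !f_rim // E.
  by move: jr; rewrite -ij i0.
have : [set f i; f j] \in wheel_edges s n.+2.
  by apply: theta_adj_wheel; apply/orP; right; rewrite jc andbT; apply/eqP.
have lt_h := ltn_ord h; have lt_j := ltn_ord j.
have ih' := ord_neq_val ih; have jh' := ord_neq_val jh.
rewrite (f_rim ih) (f_rim jh) => /(rim_pair_succ (s := s)) /(_ gij).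
by case=> [/(steps_rim_succ ih jh) | /(steps_rim_succ jh ih)]; move: jr;
  rewrite /steps i0 ltn0 /=; case: ifP; lia.
Qed.

Definition hub_adj (j : nat) : bool := theta_adj cs h (walk j) || theta_adj cs (walk j) h.

Section Offsets.
Variable J : {set 'I_m.+3}.
Hypothesis J_hub_adj : forall o : 'I_m.+3, (o \in J) = hub_adj (arc_step m b o).

Lemma spoke_mem_arc_copy k : k != h -> theta_adj cs h k || theta_adj cs k h ->
  spoke a (g k) \in arc_copy a r J.
Proof.
move=> kh adj; have [wk sk] := walk_steps kh.
have lt_arc_pos : (arc_pos k < m.+3)%N by have := arc_pos_le kh; lia.
rewrite arc_copyE inE (g_arc_pos kh); apply/orP; left; apply/imsetP.
by exists (Ordinal lt_arc_pos); rewrite // J_hub_adj /= /arc_pos arc_offK // /hub_adj wk.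
Qed.

Lemma theta_edges_sub_arc_copy : theta_edges cs f \subset arc_copy a r J.
Proof.
apply/subsetP => e /imsetP [[i j] /=]; rewrite inE /= => adj ->.
case: (eqVneq i h) => [ei | ih]; case: (eqVneq j h) => [ej | jh].
- by move: adj; rewrite ei ej (negbTE (theta_adj_irr h isT cs_range)).
- by rewrite ei f_hub (f_rim jh); apply: spoke_mem_arc_copy; rewrite // -ei adj.
- by rewrite ej f_hub (f_rim ih) setUC; apply: spoke_mem_arc_copy; rewrite // -ej adj orbT.
have sij := steps_succ ih jh (theta_adj_off_hub adj ih jh).
have [_ si] := walk_steps ih; have [_ sj] := walk_steps jh.
rewrite (f_rim ih) (f_rim jh) (g_arc_pos ih) (g_arc_pos jh) arc_copyE inE; apply/orP; right.
apply/imsetP; rewrite /arc_pos /arc_off sij; case: b.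
  have lt_o : ((steps i).-1 < m.+2)%N by lia.
  exists (Ordinal lt_o) => //=.
  by rewrite /rim_edge -addrA -mulrSr; have -> : (steps i).-1.+1 = steps i by lia.
have lt_o : (m.+3 - (steps i).+1 < m.+2)%N by lia.
exists (Ordinal lt_o) => //=.
rewrite /rim_edge setUC -addrA -mulrSr.
by have -> : (m.+3 - (steps i).+1).+1 = (m.+3 - steps i)%N by lia.
Qed.

Lemma arc_copy_sub_theta_edges : arc_copy a r J \subset theta_edges cs f.
Proof.
apply/subsetP => e; rewrite arc_copyE inE => /orP [/imsetP [o oJ ->] | /imsetP [o _ ->]].
  have lt_o : (o <= m.+2)%N by rewrite -ltnS ltn_ord.
  have js := arc_step_range b lt_o; have kh := walk_neq_hub js.
  have fk : f (walk (arc_step m b o)) = inr (r + (val o)%:R).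
    by rewrite f_rim // -/(rim_walk _) rim_walkE // arc_stepK.
  rewrite J_hub_adj in oJ; case/orP: oJ => adj; apply/imsetP.
    by exists (h, walk (arc_step m b o)); rewrite ?inE //= f_hub fk.
  by exists (walk (arc_step m b o), h); rewrite ?inE //= f_hub fk setUC.
have lt_o : (o < m.+2)%N := ltn_ord o.
pose j := if b then o.+1 else (m.+2 - o)%N.
have j1 : (1 <= j <= m.+2)%N by rewrite /j; case: b; lia.
have g1 : g (walk j) = r + (arc_off m b j)%:R by rewrite -/(rim_walk _) rim_walkE //; lia.
have g2 : g (walk j.+1) = r + (arc_off m b j.+1)%:R by rewrite -/(rim_walk _) rim_walkE //; lia.
apply/imsetP; exists (walk j, walk j.+1); first by rewrite inE; exact: theta_adj_walk.
rewrite /= !f_rim ?walk_neq_hub; try lia.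
rewrite g1 g2 /rim_edge /arc_off /j; case: b; first by rewrite /= -addrA -mulrSr.
have -> : (m.+3 - (m.+2 - o))%N = o.+1 by lia.
have -> : (m.+3 - (m.+2 - o).+1)%N = o by lia.
by rewrite setUC -addrA -mulrSr.
Qed.

End Offsets.

Lemma chord_at_hub c : c \in cs -> h != 0 :> nat -> c = h.+1.
Proof.
move=> cc h0; have c_range : (2 < c < t)%N := allP cs_range _ cc.
have lt_c : (c.-1 < t)%N by lia.
have [ch | ch] := eqVneq (Ordinal lt_c) h; first by rewrite -ch /=; lia.
have oh : ord0 != h by apply: contra_neq h0 => <-.
have adj : theta_adj cs ord0 (Ordinal lt_c).
  by apply/orP; right; rewrite /= prednK //; lia.
by have := theta_adj_off_hub adj oh ch; rewrite /= modn_small //; lia.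
Qed.

(* If the hub is [v_1] its neighbours are [v_2], [v_t] and the chord ends; otherwise the
   only possible chord ends at the hub, which then sees [v_1] as a third neighbour. *)
Lemma hub_adj_offsets : exists2 J, J \in [set hub_offsets m cs; hub_offsets_rev m cs] &
  forall o : 'I_m.+3, (o \in J) = hub_adj (arc_step m b o).
Proof.
have lt_h : (h < t)%N := ltn_ord h.
have lt_walk j : (walk j < t)%N := ltn_ord (walk j).
have [h0 | h0] := eqVneq (h : nat) 0.
  exists (if b then hub_offsets m cs else hub_offsets_rev m cs).
    by case: b; rewrite !inE eqxx ?orbT.
  move=> o; have lt_o := ltn_ord o.
  have walkE : walk (arc_step m b o) = arc_step m b o :> nat.
    by rewrite val_walk h0 modn_small //; rewrite /arc_step; case: b; lia.
  have lt_step : (arc_step m b o < t)%N by rewrite /arc_step; case: b; lia.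
  rewrite /hub_adj /theta_adj /= walkE h0 (modn_small (isT : (1 < t)%N)) modS_lt //.
  move: lt_step; rewrite /arc_step; case: b => lt_step; rewrite !inE /=.
    by case: ifP; lia.
  by rewrite (_ : (m.+3 - o).+1 = (m.+4 - o)%N); [case: ifP; lia | lia].
have csE x : (x \in cs) = (x == h.+1) && (h.+1 \in cs).
  apply/idP/idP => [xc | /andP [/eqP -> //]].
  by rewrite {1}(chord_at_hub xc h0) eqxx /= -(chord_at_hub xc h0).
move: csE; move: (h.+1 \in cs) => chord_h csE.
exists (if b then hub_offsets_rev m cs else hub_offsets m cs).
  by case: b; rewrite !inE eqxx ?orbT.
move=> o; have lt_o := ltn_ord o.
have step_range := @arc_step_range m b o lt_o.
have walkE : walk (arc_step m b o) =
    (if h + arc_step m b o < t then h + arc_step m b o else h + arc_step m b o - t)%N :> nat.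
  by rewrite val_walk modn_lt2 //; lia.
move: walkE step_range; rewrite /hub_adj /theta_adj /= /arc_step.
by case: b => walkE step_range; rewrite !inE /= !csE !modS_lt ?lt_walk // walkE;
  repeat (case: ifP => ?); lia.
Qed.

End ArcPositions.
End OneHubCopy.

Lemma one_hub_theta_copy s n m cs (F : {set {set wV s n.+2}}) :
  2 * m + 5 <= n.+2 -> all (fun i => 2 < i < m.+4) cs ->
  F \subset wheel_edges s n.+2 -> is_theta_copy m.+4 cs F ->
  #|[set a : 'I_s | (inl a : wV s n.+2) \in vset F]| == 1 ->
  exists a r, exists2 J, J \in [set hub_offsets m cs; hub_offsets_rev m cs] &
    F = arc_copy a r J.
Proof.
move=> hD cs_range F_wheel /existsP [ff /andP [/injectiveP ff_inj /eqP FE]] /cards1P [a hubs].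
pose f k := ff k; have f_inj : injective f := ff_inj.
have hub_mem a' : (inl a' \in vset F) = (a' == a) by rewrite -in_set1 -hubs inE.
have /imsetP [h _ /esym f_hub] : inl a \in f @: setT.
  by rewrite -(vset_theta_edges cs) -FE hub_mem.
pose g k : 'I_n.+2 := if f k is inr p then p else 0%R.
have f_rim k : k != h -> f k = inr (g k).
  rewrite /g; case fk: (f k) => [a' | //] kh; move: kh.
  have : inl a' \in vset F by rewrite FE vset_theta_edges -fk imset_f.
  by rewrite hub_mem => /eqP a'a; rewrite (f_inj k h) ?eqxx // fk f_hub a'a.
rewrite FE in F_wheel *.
have [r [b rim_walkE]] := rim_walk_arc f_inj f_rim F_wheel.
have [J JJ J_hub_adj] := hub_adj_offsets f_inj f_rim F_wheel hD rim_walkE cs_range.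
exists a, r, J => //; apply/eqP; rewrite eqEsubset.
rewrite (theta_edges_sub_arc_copy f_inj f_hub f_rim F_wheel hD rim_walkE cs_range J_hub_adj).
exact: (arc_copy_sub_theta_edges f_hub f_rim F_wheel hD rim_walkE cs_range J_hub_adj).
Qed.

Section CountCopies.
Variables (s n m : nat) (cs : seq nat).
Hypothesis hD : 2 * m + 5 <= n.+2.
Hypothesis cs_range : all (fun i => 2 < i < m.+4) cs.
Variables e1 e2 : {set wV s n.+2}.
Hypothesis e1_wheel : e1 \in wheel_edges s n.+2.
Hypothesis e2_wheel : e2 \in wheel_edges s n.+2.
Hypothesis e12 : e1 != e2.

Lemma card_one_hub_theta_copies :
  #|[set F : {set {set wV s n.+2}} |
      [&& F \subset wheel_edges s n.+2, is_theta_copy m.+4 cs F, e1 \in F, e2 \in F &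
          #|[set a : 'I_s | (inl a : wV s n.+2) \in vset F]| == 1]]|
  <= #|[set hub_offsets m cs; hub_offsets_rev m cs]| *
     maxn (s * m.+1) (#|hub_offsets m cs|).-1.
Proof.
set JJ := [set _; _]; set copies := [set F | _].
have sub : copies \subset
    \bigcup_(J in JJ) \bigcup_a [set arc_copy a r J | r in arc_starts a J e1 e2].
  apply/subsetP => F; rewrite inE => /and5P [F_wheel F_copy e1F e2F one_hub].
  have [a [r [J JJ_J FE]]] := one_hub_theta_copy hD cs_range F_wheel F_copy one_hub.
  apply/bigcupP; exists J => //; apply/bigcupP; exists a => //.
  by apply/imsetP; exists r; rewrite // /arc_starts inE -FE e1F e2F.
apply: leq_trans (subset_leq_card sub) _; apply: leq_trans (card_bigcup_le _ _) _.
rewrite -sum_nat_const; apply: leq_sum => J JJ_J.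
apply: leq_trans (card_bigcup_le _ _) _.
have /andP [J0 Jm] := hub_offsets_ends JJ_J.
have -> : #|hub_offsets m cs| = #|J|.
  by move: JJ_J; rewrite /JJ => /set2P [] ->; rewrite ?card_hub_offsets_rev.
apply: leq_trans (sum_card_arc_starts hD e1_wheel e2_wheel e12 J0 Jm).
by apply: leq_sum => a _; apply: leq_imset_card.
Qed.

End CountCopies.

Theorem lemma2p1 (d s t l : nat) (cs : seq nat) :
  1 <= s -> 2 * t - 3 <= d -> 4 <= t -> l + 3 <= t ->
  theta_data t l cs ->
  forall e1 e2 : {set wV s d},
    e1 \in wheel_edges s d -> e2 \in wheel_edges s d -> e1 != e2 ->
    #|[set F : {set {set wV s d}} |
        [&& F \subset wheel_edges s d,
            is_theta_copy t cs F,
            e1 \in F, e2 \in F &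
            #|[set a : 'I_s | (inl a : wV s d) \in vset F]| == 1]]|
    <= bound_N s t cs.
Proof.
move=> s_gt0 hd t4 _ [_ cs_sorted cs_range] e1 e2 e1w e2w e12.
case: t hd t4 cs_sorted cs_range => [|[|[|[|m]]]] // hd _ cs_sorted cs_range.
case: d hd e1 e2 e1w e2w e12 => [|[|n]] hd e1 e2 e1w e2w e12; try lia.
have hD : 2 * m + 5 <= n.+2 by lia.
apply: leq_trans (card_one_hub_theta_copies hD cs_range e1w e2w e12) _.
have le_s : m.+1 <= s * m.+1 by rewrite leq_pmull.
rewrite /bound_N [m.+4 - 3]/= [m.+4 - 2]/=.
case: ifP => [fan | /negbT /(card_hub_offsets_nonfan cs_sorted cs_range) small].
  have [-> ->] := hub_offsets_fan fan.
  by rewrite setUid cards1 mul1n cardsT card_ord.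
have -> : maxn (s * m.+1) (#|hub_offsets m cs|).-1 = s * m.+1.
  by apply/maxn_idPl; apply: leq_trans le_s; rewrite -subn1 leq_subLR add1n.
case: ifP => [sym | _].
  by rewrite -(hub_offsets_sym sym) setUid cards1 mul1n.
by rewrite -mulnA leq_mul2r cards2 ltnS leq_b1 orbT.
Qed.
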